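(* A random choice rule $p$ with a habit formation logit representation $(v,c)$ satisfies independence of irrelevant alternatives if and only if $c(x)=0$ for all $x\in X$.
   Context: $X$ is a finite set containing an outside option $o$; choice sets are the subsets $A\subseteq X$ containing $o$. Given $v:X\to\mathbb{R}$ and $c:X\to\mathbb{R}_{\ge0}$ with $v(o)=c(o)=0$, for each choice set $A$ define the Markov chain on $A$ with transition probabilities $p(x,A\mid y)=\frac{e^{v(x)+c(x)\mathbf{1}\{x=y\}}}{\sum_{z\in A}e^{v(z)+c(z)\mathbf{1}\{z=y\}}}$ (from $y$ to $x$). A random choice rule $p$ has a habit formation logit representation $(v,c)$ if for every choice set $A$, $p(\cdot,A)$ is the (unique) stationary distribution of this chain. $p$ satisfies independence of irrelevant alternatives (IIA) if for all choice sets $A,B$ and $x,y\in A\cap B$, $\frac{p(x,A)}{p(y,A)}=\frac{p(x,B)}{p(y,B)}$. *)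

From mathcomp Require Import all_boot all_order all_algebra.
From mathcomp Require Import all_classical all_reals all_analysis.
Set Implicit Arguments. Unset Strict Implicit. Unset Printing Implicit Defensive.
Import Order.TTheory GRing.Theory Num.Theory.
Local Open Scope ring_scope.

Section HFL.
Variables (R : realType) (X : finType).

(* transition probability from y to x in the chain on choice set A *)
Definition hfl_trans (v c : X -> R) (A : {set X}) (y x : X) : R :=
  expR (v x + (if x == y then c x else 0)) /
  \sum_(z in A) expR (v z + (if z == y then c z else 0)).

Definition hfl_stationary (v c : X -> R) (A : {set X}) (q : X -> R) : Prop :=
  [/\ (forall x, x \in A -> 0 <= q x),
      \sum_(x in A) q x = 1
    & (forall x, x \in A -> q x = \sum_(y in A) q y * hfl_trans v c A y x)].

(* p x A = p(x, A); choice sets are the A : {set X} with o \in A *)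
Definition hfl_logit_rep (o : X) (p : X -> {set X} -> R) (v c : X -> R) : Prop :=
  [/\ v o = 0, c o = 0, (forall x, 0 <= c x)
    & forall A : {set X}, o \in A -> hfl_stationary v c A (fun x => p x A)].

Definition IIA (o : X) (p : X -> {set X} -> R) : Prop :=
  forall A B : {set X}, o \in A -> o \in B ->
  forall x y, x \in A :&: B -> y \in A :&: B ->
    p x A / p y A = p x B / p y B.

End HFL.

(* The chain on a choice set A moves from y to x <> y with probability
   e^{v x} / D_A(y), where D_A(y) = S_A + (e^{v y + c y} - e^{v y}) and
   S_A = sum_{z in A} e^{v z}. Solving the balance equations shows that the
   stationary distribution is proportional to e^{v x} D_A(x), so
   p(x,A) / p(o,A) = e^{v x - v o} (1 + (e^{v x + c x} - e^{v x}) / S_A).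
   If c = 0 this is e^{v x - v o} for every A. Conversely, adding a third
   alternative z to A = {o, x} changes S_A but not the ratio under IIA, which
   forces e^{v x + c x} = e^{v x}, i.e. c x = 0. *)
From mathcomp Require Import all_boot all_order all_algebra.
From mathcomp Require Import all_classical all_reals all_analysis.
From mathcomp Require Import ring lra.
Set Implicit Arguments. Unset Strict Implicit.
Import Order.TTheory GRing.Theory Num.Theory.
Local Open Scope ring_scope.

Lemma div_shift_eq0 (R : fieldType) (S1 S2 d : R) :
  S1 != 0 -> S2 != 0 -> S1 != S2 -> (S1 + d) / S1 = (S2 + d) / S2 -> d = 0.
Proof.
move=> S1_neq0 S2_neq0 S12 eq_shift.
have : d * (S2 - S1) = 0.
  have -> : d * (S2 - S1) = S1 * S2 * ((S1 + d) / S1 - (S2 + d) / S2).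
    by field; rewrite S1_neq0 S2_neq0.
  by rewrite eq_shift subrr mulr0.
by move/eqP; rewrite mulf_eq0 subr_eq0 [S2 == _]eq_sym (negPf S12) orbF => /eqP.
Qed.

Lemma exists_notin_set2 (T : finType) (a b : T) :
  (3 <= #|T|)%N -> exists z, z \notin [set a; b].
Proof.
move=> T3; have : (0 < #|~: [set a; b]|)%N.
  rewrite -(leq_add2l #|[set a; b]|) cardsC cards2.
  by apply: leq_trans T3; case: (a != b).
by rewrite card_gt0 => /set0Pn[z]; rewrite inE; exists z.
Qed.

Section HabitLogitChain.
Variables (R : realType) (X : finType) (v c : X -> R).
Implicit Types (A : {set X}) (x y : X).

Definition logit_mass A : R := \sum_(z in A) expR (v z).

Definition habit_denom A y : R :=
  \sum_(z in A) expR (v z + (if z == y then c z else 0)).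

Definition habit_bonus x : R := expR (v x + c x) - expR (v x).

Lemma sum_expR_gt0 A (f : X -> R) x : x \in A -> 0 < \sum_(z in A) expR (f z).
Proof.
move=> xA; rewrite (bigD1 x) //=; apply: ltr_wpDr; last exact: expR_gt0.
by apply: sumr_ge0 => z _; exact/ltW/expR_gt0.
Qed.

Lemma logit_mass_gt0 A x : x \in A -> 0 < logit_mass A.
Proof. exact: sum_expR_gt0. Qed.

Lemma habit_denomE A y : y \in A -> habit_denom A y = logit_mass A + habit_bonus y.
Proof.
move=> yA; rewrite /habit_denom /logit_mass /habit_bonus !(bigD1 y yA) /= eqxx.
have -> : \sum_(z in A | z != y) expR (v z + (if z == y then c z else 0)) =
          \sum_(z in A | z != y) expR (v z).
  by apply: eq_bigr => z /andP[_ /negPf ->]; rewrite addr0.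
ring.
Qed.

Lemma habit_denom_gt0 A y : y \in A -> 0 < habit_denom A y.
Proof. exact: sum_expR_gt0. Qed.

Lemma habit_bonus_eq0 x : (habit_bonus x = 0) <-> (c x = 0).
Proof.
rewrite /habit_bonus; split=> [/eqP|->]; last by rewrite addr0 subrr.
by rewrite subr_eq0 => /eqP/expR_inj; rewrite -{2}[v x]addr0 => /addrI.
Qed.

Lemma habit_denom_unbiased A y :
  y \in A -> c y = 0 -> habit_denom A y = logit_mass A.
Proof. by move=> yA /habit_bonus_eq0 cy0; rewrite habit_denomE // cy0 addr0. Qed.

Lemma hfl_stationary_form A q : hfl_stationary v c A q ->
  exists2 K, K != 0 & forall x, x \in A -> q x = K * (expR (v x) * habit_denom A x).
Proof.
case=> _ q_sum1 balance.
have [x0 x0A] : exists x0, x0 \in A.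
  apply/set0Pn; apply: contra_eqN q_sum1 => /eqP ->.
  by rewrite big_set0 eq_sym oner_eq0.
set K := \sum_(y in A) q y / habit_denom A y.
have S_neq0 := lt0r_neq0 (logit_mass_gt0 x0A).
have qE x : x \in A -> q x = K / logit_mass A * (expR (v x) * habit_denom A x).
  move=> xA; have D_neq0 := lt0r_neq0 (habit_denom_gt0 xA).
  set D := habit_denom A x in D_neq0 *; set e := expR (v x); set E := expR (v x + c x).
  set T := \sum_(y in A | y != x) q y / habit_denom A y.
  have KE : K = q x / D + T by rewrite /K (bigD1 x).
  (* the balance equation at x, split into staying at x and arriving from y <> x *)
  have eT : e * T = q x - q x * E / D.
    rewrite {1}(balance x xA) (bigD1 x xA) /= /hfl_trans eqxx -/D -/E.
    rewrite mulrA addrAC subrr add0r mulr_sumr; apply: eq_bigr => y /andP[_ yx].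
    by rewrite ifN_eqC // addr0 mulrCA.
  have DE : D = logit_mass A + E - e by rewrite /D habit_denomE // /habit_bonus addrA.
  clearbody K D e E T.
  apply: (mulIf S_neq0); rewrite mulrAC divfK // KE.
  have -> : (q x / D + T) * (e * D) = q x * e + e * T * D by field.
  by rewrite eT DE; field; rewrite -DE.
exists (K / logit_mass A); last exact: qE.
apply: contra_eqN q_sum1 => /eqP K0.
rewrite big1 => [|x xA]; first by rewrite eq_sym oner_eq0.
by rewrite qE // K0 mul0r.
Qed.

Lemma hfl_stationary_ratio A q x y : hfl_stationary v c A q -> x \in A -> y \in A ->
  q x / q y = expR (v x) * habit_denom A x / (expR (v y) * habit_denom A y).
Proof.
move=> /hfl_stationary_form[K K_neq0 qE] xA yA; rewrite !qE //.
have := habit_denom_gt0 yA; have := expR_gt0 (v y) => ey_gt0 Dy_gt0.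
by field; rewrite K_neq0 (gt_eqF ey_gt0) (gt_eqF Dy_gt0).
Qed.

Lemma hfl_stationary_ratio_unbiased A q x y :
  hfl_stationary v c A q -> x \in A -> y \in A -> c y = 0 ->
  q x / q y = expR (v x) / expR (v y) * ((logit_mass A + habit_bonus x) / logit_mass A).
Proof.
move=> stat xA yA cy0.
rewrite (hfl_stationary_ratio stat) // (habit_denom_unbiased yA cy0).
rewrite habit_denomE //; have := logit_mass_gt0 yA; have := expR_gt0 (v y).
by move=> ey_gt0 S_gt0; field; rewrite !gt_eqF.
Qed.

End HabitLogitChain.

Theorem proposition4 (R : realType) (X : finType) (o : X)
  (p : X -> {set X} -> R) (v c : X -> R) :
  (3 <= #|X|)%N ->
  hfl_logit_rep o p v c ->
  (IIA o p <-> forall x : X, c x = 0).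
Proof.
move=> X3 [_ co0 _ stat]; split=> [iia x|c0]; last first.
  move=> A B oA oB x y /setIP[xA xB] /setIP[yA yB].
  rewrite !(hfl_stationary_ratio_unbiased (stat _ _)) //.
  rewrite ((habit_bonus_eq0 v c x).2 (c0 x)) !addr0.
  have SA := lt0r_neq0 (logit_mass_gt0 v oA); have SB := lt0r_neq0 (logit_mass_gt0 v oB).
  by rewrite !divff.
have [-> // | xo] := eqVneq x o.
have [z zNox] := exists_notin_set2 o x X3.
set A := [set o; x]; set B := z |: A.
have oA : o \in A by rewrite !inE eqxx.
have xA : x \in A by rewrite !inE eqxx orbT.
have [oB xB] : o \in B /\ x \in B by split; apply: setU1r.
have SB : logit_mass v B = expR (v z) + logit_mass v A by rewrite /logit_mass big_setU1.
have SAB : logit_mass v A != logit_mass v B by rewrite SB; have := expR_gt0 (v z); lra.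
have [xAB oAB] : x \in A :&: B /\ o \in A :&: B by split; apply/setIP.
have := iia A B oA oB x o xAB oAB.
rewrite !(hfl_stationary_ratio_unbiased (stat _ _)) // => /mulrI eq_shift.
apply/(habit_bonus_eq0 v c x)/(div_shift_eq0 _ _ SAB (eq_shift _)).
- exact/lt0r_neq0/(logit_mass_gt0 v oA).
- exact/lt0r_neq0/(logit_mass_gt0 v oB).
- by rewrite unitfE mulf_neq0 // ?invr_eq0 lt0r_neq0 // expR_gt0.
Qed.
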